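(* Let $n,s,r$ be positive integers, let $\mathbf{W}_{\mathbf{x}}\in\mathbb{R}^{n\times n}$ and $\mathbf{W}_{\boldsymbol{\xi}}\in\mathbb{R}^{s\times s}$ be diagonal matrices with positive diagonal entries, and let $t\mapsto \bm{T}(t)\in\mathbb{R}^{n\times s}$ be a given differentiable matrix-valued function of time with derivative $\dot{\bm{T}}$. For matrices $\bm{U}\in\mathbb{R}^{n\times r}$, $\bm{Y}\in\mathbb{R}^{s\times r}$ and a skew-symmetric matrix function $\boldsymbol{\phi}(t)\in\mathbb{R}^{r\times r}$, consider the evolution equations $$\dot{\bm{U}} = \left(\bm{I}-\bm{U}\bm{U}^T\mathbf{W}_{\mathbf{x}}\right)\dot{\bm{T}}\,\mathbf{W}_{\boldsymbol{\xi}}\,\bm{Y}\,\bm{C}^{-1} + \bm{U}\boldsymbol{\phi},\qquad \dot{\bm{Y}} = \dot{\bm{T}}^T\mathbf{W}_{\mathbf{x}}\bm{U} + \bm{Y}\boldsymbol{\phi},$$ where $\bm{C}=\bm{Y}^T\mathbf{W}_{\boldsymbol{\xi}}\bm{Y}\in\mathbb{R}^{r\times r}$ is assumed invertible. Suppose $\{\bm{Y},\bm{U}\}$ satisfies these equations with a skew-symmetric choice $\boldsymbol{\phi}(t)$ and $\{\widetilde{\bm{Y}},\widetilde{\bm{U}}\}$ satisfies them (with $\widetilde{\bm{C}}=\widetilde{\bm{Y}}^T\mathbf{W}_{\boldsymbol{\xi}}\widetilde{\bm{Y}}$ in place of $\bm{C}$) with a skew-symmetric choice $\widetilde{\boldsymbol{\phi}}(t)$.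 Assume the two reductions are initially equivalent, i.e. $\bm{U}(0)=\widetilde{\bm{U}}(0)\bm{R}_0$ and $\bm{Y}(0)=\widetilde{\bm{Y}}(0)\bm{R}_0$ for some orthogonal matrix $\bm{R}_0\in\mathbb{R}^{r\times r}$ ($\bm{R}_0^T\bm{R}_0=\bm{I}$). Then for $t>0$ the two reductions are equivalent, i.e. $\bm{U}(t)=\widetilde{\bm{U}}(t)\bm{R}(t)$ and $\bm{Y}(t)=\widetilde{\bm{Y}}(t)\bm{R}(t)$ with an orthogonal matrix $\bm{R}(t)\in\mathbb{R}^{r\times r}$ governed by the matrix differential equation $\dot{\bm{R}}=\bm{R}\boldsymbol{\phi}-\widetilde{\boldsymbol{\phi}}\bm{R}$, $\bm{R}(0)=\bm{R}_0$.
   Context: The columns of $\bm{T}(t)$ are (mean-subtracted) observations of a stochastic system at time $t$; $\mathbf{W}_{\mathbf{x}}=\mathrm{diag}(\mathbf{w}_{\mathbf{x}})$ are state-space weights and $\mathbf{W}_{\boldsymbol{\xi}}=\mathrm{diag}(\mathbf{w}_{\boldsymbol{\xi}})$ are sample weights. The columns of $\bm{U}$ (the dynamic basis) are orthonormal with respect to the weighted inner product $\langle \bm{u}_i,\bm{u}_j\rangle=\bm{u}_i^T\mathbf{W}_{\mathbf{x}}\bm{u}_j$, i.e. $\bm{U}^T\mathbf{W}_{\mathbf{x}}\bm{U}=\bm{I}$, and $\boldsymbol{\phi}_{ij}=\langle\bm{u}_i,\dot{\bm{u}}_j\rangle$ is skew-symmetric. Two reductions $\{\bm{Y},\bm{U}\}$,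 $\{\widetilde{\bm{Y}},\widetilde{\bm{U}}\}$ with $\bm{U},\widetilde{\bm{U}}\in\mathbb{R}^{n\times r}$, $\bm{Y},\widetilde{\bm{Y}}\in\mathbb{R}^{s\times r}$ are called equivalent if there is an orthogonal $\bm{R}\in\mathbb{R}^{r\times r}$ with $\bm{U}=\widetilde{\bm{U}}\bm{R}$ and $\bm{Y}=\widetilde{\bm{Y}}\bm{R}$. *)

From HB Require Import structures.
From mathcomp Require Import all_boot all_order all_algebra.
From mathcomp Require Import all_classical all_reals.
From mathcomp Require Import topology normedtype derive.
Set Implicit Arguments. Unset Strict Implicit. Unset Printing Implicit Defensive.
Import Order.TTheory GRing.Theory Num.Theory.
Local Open Scope ring_scope.

Definition mx_deriv_at (R : realType) (m n : nat)
  (F : R -> 'M[R]_(m, n)) (t : R) (D : 'M[R]_(m, n)) : Prop :=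
  forall (i : 'I_m) (j : 'I_n), is_derive (t : R^o) (1 : R^o) (fun s : R^o => F s i j : R^o) (D i j).

Definition mx_cont_at (R : realType) (m n : nat)
  (F : R -> 'M[R]_(m, n)) (t : R) : Prop :=
  forall (i : 'I_m) (j : 'I_n), {for (t : R^o), continuous (fun s : R^o => F s i j : R^o)}.

Definition skew_mx (R : realType) (r : nat) (A : 'M[R]_r) : Prop := A^T = - A.

Definition orthogonal_mx (R : realType) (r : nat) (A : 'M[R]_r) : Prop :=
  A^T *m A = 1%:M.

(* diagonal weight matrix with positive diagonal entries *)
Definition pos_rV (R : realType) (n : nat) (w : 'rV[R]_n) : Prop :=
  forall i : 'I_n, 0 < w 0 i.

Definition evol_eqs (R : realType) (n s r : nat)
  (Wx : 'M[R]_n) (Wxi : 'M[R]_s) (dT : 'M[R]_(n, s))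
  (U dU : 'M[R]_(n, r)) (Y dY : 'M[R]_(s, r)) (phi : 'M[R]_r) : Prop :=
  let C := Y^T *m Wxi *m Y in
  dU = (1%:M - U *m U^T *m Wx) *m dT *m Wxi *m Y *m invmx C + U *m phi /\
  dY = dT^T *m Wx *m U + Y *m phi.

(** The gauge-invariant content of a reduction {Y, U} is the pair Z = U Y^T,
    P = U U^T Wx (the Wx-orthogonal projector onto the span of U).  Along the
    evolution equations the rotation phi cancels from Z' and P', and both are
    polynomial in Z, P, dT and the inverse of S = Z Wxi Z^T Wx + (1 - P), since
    S^-1 = U C^-1 U^T Wx + (1 - P).  So (Z, P) solves a closed ODE whose right-hand
    side is Lipschitz along the two trajectories on every compact time interval,
    and Gronwall's inequality for the squared distance shows that equal initial
    invariants stay equal.  Once P = P~ and Z = Z~, the matrix R = U~^T Wx U is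
    orthogonal, U = U~ R, Y = Y~ R, and differentiating R gives R' = R phi - phi~ R. *)

From HB Require Import structures.
From mathcomp Require Import all_boot all_order all_algebra.
From mathcomp Require Import all_classical all_reals.
From mathcomp Require Import topology normedtype derive sequences realfun exp.
From mathcomp Require Import lra ring.
Import Order.TTheory GRing.Theory Num.Theory numFieldNormedType.Exports.
Local Open Scope ring_scope.
Set Implicit Arguments. Unset Strict Implicit. Unset Printing Implicit Defensive.

(** * Gronwall's inequality *)

Section Gronwall.
Variable R : realType.

Lemma sqr_sum_norm_le (I : finType) (a : I -> R) :
  (\sum_i `|a i|) ^+ 2 <= #|I|%:R * \sum_i a i ^+ 2.
Proof.
have amgm i j : `|a i| * `|a j| <= (a i ^+ 2 + a j ^+ 2) / 2.
  rewrite -[a i ^+ 2]real_normK ?num_real // -[a j ^+ 2]real_normK ?num_real //.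
  move: `|a i| `|a j| => u v.
  have := sqr_ge0 (u - v); lra.
have sum_amgm : \sum_i \sum_j (a i ^+ 2 + a j ^+ 2) / 2 = #|I|%:R * \sum_i a i ^+ 2.
  under eq_bigr do rewrite -mulr_suml big_split /= sumr_const.
  rewrite -mulr_suml big_split /= sumr_const sumrMnl mulr_natl.
  by move: (_ *+ #|I|) => S; lra.
rewrite -sum_amgm expr2 mulr_suml; under eq_bigr do rewrite mulr_sumr.
by apply: ler_sum => i _; apply: ler_sum => j _; exact: amgm.
Qed.

Lemma is_derive_sum_fin (I : finType) (h : I -> R -> R) (dh : I -> R) (x : R) :
  (forall i, is_derive x 1 (h i) (dh i)) ->
  is_derive x 1 (fun s => \sum_i h i s) (\sum_i dh i).
Proof.
move=> hd; rewrite -fct_sumE.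
by elim/big_ind2: _ => // [|f df g dg]; [exact: is_derive_cst | exact: is_deriveD].
Qed.

Lemma gronwall_le0 (E dE : R -> R) (L t : R) : 0 <= t -> E 0 = 0 ->
  (forall s, 0 <= s <= t -> is_derive s 1 E (dE s)) ->
  (forall s, 0 < s < t -> dE s <= L * E s) -> E t <= 0.
Proof.
move=> t_ge0 E0 dE_E dE_le.
pose f s := E s * expR (- L * s).
have df s : 0 <= s <= t -> is_derive s 1 f (expR (- L * s) * (dE s - L * E s)).
  move=> /dE_E dEs.
  have dlin : is_derive s 1 (fun u : R => - L * u) (- L).
    apply: is_derive_eq (is_deriveZ (- L) (is_derive_id s 1)) _.
    by rewrite /GRing.scale /= mulr1.
  have dexp := is_derive1_comp (is_derive_expR (- L * s)) dlin.
  apply: is_derive_eq (is_deriveM dEs dexp) _.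
  rewrite /GRing.scale /=; ring.
have f_cont : {within `[0, t], continuous f}%classic.
  apply: derivable_within_continuous => u /[!in_itv] /= u0t.
  by apply: ex_derive; exact: df.
have f_decr : f t <= f 0.
  apply: (ler0_derive1_le_cc _ _ f_cont); rewrite ?in_itv /= ?lexx ?t_ge0 //.
  - move=> u /[!in_itv] /= /andP[u0 ut].
    by apply: ex_derive; apply: df; rewrite !ltW.
  move=> u /[!in_itv] /= /andP[u0 ut].
  have u0t : 0 <= u <= t by rewrite !ltW.
  have dfu := df u u0t; rewrite derive1E derive_val.
  by rewrite mulr_ge0_le0 ?expR_ge0 // subr_le0 dE_le ?u0.
move: f_decr; rewrite /f E0 mul0r.
by rewrite pmulr_lle0 ?expR_gt0.
Qed.

Lemma gronwall_unique (I : finType) (x y dx dy : R -> I -> R) :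
  (forall t : R, 0 <= t -> forall e, is_derive t 1 (fun s => x s e) (dx t e)) ->
  (forall t : R, 0 <= t -> forall e, is_derive t 1 (fun s => y s e) (dy t e)) ->
  x 0 =1 y 0 ->
  (forall T : R, 0 <= T -> exists2 M : R, 0 <= M & forall t, 0 <= t <= T -> forall e,
     `|dx t e - dy t e| <= M * \sum_k `|x t k - y t k|) ->
  forall t : R, 0 <= t -> x t =1 y t.
Proof.
move=> dx_x dy_y xy0 lip t t_ge0.
have [M M_ge0 dxy_le] := lip t t_ge0.
pose d s e := x s e - y s e.
pose E s := \sum_e d s e ^+ 2.
pose dE s := \sum_e 2 * ((dx s e - dy s e) * d s e).
have E_ge0 s : 0 <= E s by apply: sumr_ge0 => e _; exact: sqr_ge0.
have Et_le0 : E t <= 0.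
  apply: (@gronwall_le0 E dE (2 * M * #|I|%:R)) => //.
  - by rewrite /E big1 // => e _; rewrite /d xy0 subrr expr0n.
  - move=> s /andP[s_ge0 _]; apply: is_derive_sum_fin => e.
    have dd := is_deriveB (dx_x s s_ge0 e) (dy_y s s_ge0 e).
    apply: is_derive_eq (is_deriveM dd dd) _.
    by change (d s e * (dx s e - dy s e) + d s e * (dx s e - dy s e) =
            2 * ((dx s e - dy s e) * d s e)); ring.
  move=> s /andP[s_gt0 s_lt_t].
  have /dxy_le dxy_s : 0 <= s <= t by rewrite !ltW.
  set delta := \sum_k `|x s k - y s k| in dxy_s.
  have dE_le : dE s <= 2 * M * delta ^+ 2.
    rewrite expr2 mulrA {2}/delta mulr_sumr; apply: ler_sum => e _.
    rewrite -!mulrA ler_pM2l // mulrA (le_trans (ler_norm _)) // normrM.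
    by rewrite ler_pM ?normr_ge0.
  apply: le_trans dE_le _; rewrite -[2 * M * _ * _]mulrA ler_wpM2l ?mulr_ge0 //.
  exact: sqr_sum_norm_le.
move=> e; apply/eqP; rewrite -subr_eq0 -sqrf_eq0.
have /psumr_eq0P -> // : E t = 0 by apply/eqP; rewrite eq_le Et_le0 E_ge0.
by move=> k _; exact: sqr_ge0.
Qed.
End Gronwall.

(** * Entrywise calculus of matrix-valued functions *)

Section MatrixCalculus.
Variable R : realType.
Implicit Types t : R.

Lemma mx_deriv_at_cst m n (c : 'M[R]_(m, n)) t : mx_deriv_at (fun=> c) t 0.
Proof. by move=> i j; rewrite mxE; exact: is_derive_cst. Qed.

Lemma mx_deriv_at_tr m n (F : R -> 'M[R]_(m, n)) t dF :
  mx_deriv_at F t dF -> mx_deriv_at (fun s => (F s)^T) t dF^T.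
Proof. by move=> dF_F i j; rewrite mxE; under eq_fun do rewrite mxE; exact: dF_F. Qed.

Lemma mx_deriv_atM m n p (F : R -> 'M[R]_(m, n)) (G : R -> 'M[R]_(n, p)) t dF dG :
  mx_deriv_at F t dF -> mx_deriv_at G t dG ->
  mx_deriv_at (fun s => F s *m G s) t (dF *m G t + F t *m dG).
Proof.
move=> dF_F dG_G i j; rewrite !mxE -big_split /=.
under eq_fun do rewrite mxE.
rewrite -fct_sumE; apply: is_derive_sum => k.
apply: is_derive_eq (is_deriveM (dF_F i k) (dG_G k j)) _.
by rewrite addrC [dF i k * _]mulrC.
Qed.

Lemma mx_deriv_at_cont m n (F : R -> 'M[R]_(m, n)) t D :
  mx_deriv_at F t D -> mx_cont_at F t.
Proof.
move=> dF i j; apply: differentiable_continuous; rewrite -derivable1_diffP.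
by apply: ex_derive; exact: dF.
Qed.

Lemma mx_cont_at_cst m n (c : 'M[R]_(m, n)) t : mx_cont_at (fun=> c) t.
Proof. by move=> i j; exact: cst_continuous. Qed.

Lemma mx_cont_at_tr m n (F : R -> 'M[R]_(m, n)) t :
  mx_cont_at F t -> mx_cont_at (fun s => (F s)^T) t.
Proof.
move=> cF i j; rewrite (_ : (fun s => _) = fun s => F s j i) //.
by apply/funext => s; rewrite mxE.
Qed.

Lemma mx_cont_atD m n (F G : R -> 'M[R]_(m, n)) t :
  mx_cont_at F t -> mx_cont_at G t -> mx_cont_at (fun s => F s + G s) t.
Proof.
move=> cF cG i j; rewrite (_ : (fun s => _) = (fun s => F s i j) + (fun s => G s i j)).
  exact: continuousD.
by apply/funext => s; rewrite mxE.
Qed.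

Lemma mx_cont_atN m n (F : R -> 'M[R]_(m, n)) t :
  mx_cont_at F t -> mx_cont_at (fun s => - F s) t.
Proof.
move=> cF i j; rewrite (_ : (fun s => _) = fun s => - F s i j); first exact: continuousN.
by apply/funext => s; rewrite mxE.
Qed.

Lemma mx_cont_atM m n p (F : R -> 'M[R]_(m, n)) (G : R -> 'M[R]_(n, p)) t :
  mx_cont_at F t -> mx_cont_at G t -> mx_cont_at (fun s => F s *m G s) t.
Proof.
move=> cF cG i j.
rewrite (_ : (fun s => _) = fun s => \sum_k F s i k * G s k j); last first.
  by apply/funext => s; rewrite mxE.
apply: cvg_big => [|k _]; first exact: add_continuous.
exact: continuousM.
Qed.

Lemma mx_cont_at_det n (F : R -> 'M[R]_n) t :
  mx_cont_at F t -> {for t, continuous (fun s => \det (F s))}.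
Proof.
move=> cF; rewrite /continuous_at /determinant.
apply: cvg_big => [|p _]; first exact: add_continuous.
apply: cvgM; first exact: cvg_cst.
apply: cvg_big => [|i _]; first exact: mul_continuous.
exact: cF.
Qed.

Lemma mx_cont_at_adj n (F : R -> 'M[R]_n) t :
  mx_cont_at F t -> mx_cont_at (fun s => \adj (F s)) t.
Proof.
move=> cF i j.
rewrite (_ : (fun s => _) = fun s => (-1) ^+ (j + i) * \det (row' j (col' i (F s)))).
  apply: continuousM; first exact: cst_continuous.
  apply: mx_cont_at_det => a b.
  rewrite (_ : (fun s => _) = fun s => F s (lift j a) (lift i b)) //.
  by apply/funext => s; rewrite !mxE.
by apply/funext => s; rewrite mxE.
Qed.
End MatrixCalculus.

(** * Uniform bounds on a compact time interval *)

Lemma ler_sum_term (R : numDomainType) (I : finType) (f : I -> R) (i : I) :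
  (forall k, 0 <= f k) -> f i <= \sum_k f k.
Proof. by move=> f_ge0; rewrite (bigD1 i) //= lerDl sumr_ge0. Qed.

Section UniformBounds.
Variables (R : realType) (T : R).
Hypothesis T_ge0 : 0 <= T.

Definition bounded_mx m n (F : R -> 'M[R]_(m, n)) :=
  exists2 M : R, 0 <= M & forall t, 0 <= t <= T -> forall i j, `|F t i j| <= M.

Lemma norm_mulmx_entry_le m n p (A : 'M[R]_(m, n)) (B : 'M[R]_(n, p)) a b i j :
  (forall i k, `|A i k| <= a) -> (forall k j, `|B k j| <= b) ->
  `|(A *m B) i j| <= n%:R * (a * b).
Proof.
move=> A_le B_le; rewrite mxE (le_trans (ler_norm_sum _ _ _)) //.
have -> : n%:R * (a * b) = \sum_(k < n) (a * b).
  by rewrite sumr_const card_ord mulr_natl.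
apply: ler_sum => k _.
by rewrite normrM ler_pM ?normr_ge0.
Qed.

Lemma norm_entry_le_sum m n (A : 'M[R]_(m, n)) i j :
  `|A i j| <= \sum_i' \sum_j' `|A i' j'|.
Proof.
apply: le_trans (ler_sum_term (f := fun j' => `|A i j'|) j _) _ => //.
by apply: (ler_sum_term (f := fun i' => \sum_j' `|A i' j'|)) => k; apply: sumr_ge0.
Qed.

Lemma bounded_mx_cst m n (c : 'M[R]_(m, n)) : bounded_mx (fun=> c).
Proof.
exists (\sum_i \sum_j `|c i j|) => [|t _ i j]; last exact: norm_entry_le_sum.
by apply: sumr_ge0 => i _; exact: sumr_ge0.
Qed.

Lemma bounded_mx_cont m n (F : R -> 'M[R]_(m, n)) :
  (forall t, 0 <= t <= T -> mx_cont_at F t) -> bounded_mx F.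
Proof.
move=> cF; pose g s := \sum_i \sum_j `|F s i j|.
have g_cont : {within `[0, T], continuous g}%classic.
  apply: continuous_in_subspaceT => s /[!(in_setE, in_itv)] /= /cF cFs.
  apply: cvg_big => [|i _]; first exact: add_continuous.
  apply: cvg_big => [|j _]; first exact: add_continuous.
  exact: (continuous_comp (cFs i j) (@norm_continuous _ R^o _)).
have [c _ g_le] := EVT_max T_ge0 g_cont.
exists (g c) => [|t t0T i j]; first by apply: sumr_ge0 => i _; exact: sumr_ge0.
by apply: le_trans (norm_entry_le_sum _ i j) (g_le t _); rewrite in_itv.
Qed.

Lemma bounded_mx_invmx n (F : R -> 'M[R]_n) :
  (forall t, 0 <= t <= T -> mx_cont_at F t) ->
  (forall t, 0 <= t <= T -> F t \in unitmx) -> bounded_mx (fun t => invmx (F t)).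
Proof.
move=> cF F_unit; pose g s := `|\det (F s)|^-1.
have g_cont : {within `[0, T], continuous g}%classic.
  apply: continuous_in_subspaceT => s /[!(in_setE, in_itv)] /= s0T.
  apply: (@continuousV _ _ (fun u => `|\det (F u)|)).
    by rewrite normr_eq0 -unitfE -unitmxE F_unit.
  exact: (continuous_comp (mx_cont_at_det (cF s s0T)) (@norm_continuous _ R^o _)).
have [c _ g_le] := EVT_max T_ge0 g_cont.
have [M M_ge0 adj_le] := bounded_mx_cont (fun t t0T => mx_cont_at_adj (cF t t0T)).
exists (g c * M) => [|t t0T i j]; first by rewrite mulr_ge0 ?invr_ge0.
rewrite /invmx F_unit // mxE normrM normfV.
by rewrite ler_pM ?invr_ge0 ?normr_ge0 ?adj_le // g_le ?in_itv.
Qed.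

Lemma bounded_mxD m n (F G : R -> 'M[R]_(m, n)) :
  bounded_mx F -> bounded_mx G -> bounded_mx (fun t => F t + G t).
Proof.
move=> [M1 M1_ge0 F_le] [M2 M2_ge0 G_le].
exists (M1 + M2) => [|t t0T i j]; first exact: addr_ge0.
by rewrite mxE (le_trans (ler_normD _ _)) // lerD ?F_le ?G_le.
Qed.

Lemma bounded_mxN m n (F : R -> 'M[R]_(m, n)) :
  bounded_mx F -> bounded_mx (fun t => - F t).
Proof. by move=> [M M_ge0 F_le]; exists M => // t t0T i j; rewrite mxE normrN F_le. Qed.

Lemma bounded_mx_tr m n (F : R -> 'M[R]_(m, n)) :
  bounded_mx F -> bounded_mx (fun t => (F t)^T).
Proof. by move=> [M M_ge0 F_le]; exists M => // t t0T i j; rewrite mxE F_le. Qed.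

Lemma bounded_mxM m n p (F : R -> 'M[R]_(m, n)) (G : R -> 'M[R]_(n, p)) :
  bounded_mx F -> bounded_mx G -> bounded_mx (fun t => F t *m G t).
Proof.
move=> [M1 M1_ge0 F_le] [M2 M2_ge0 G_le].
exists (n%:R * (M1 * M2)) => [|t t0T i j]; first by rewrite !mulr_ge0.
exact: norm_mulmx_entry_le (F_le t t0T) (G_le t t0T).
Qed.

(** [delta] will be the distance between two trajectories of the invariants;
    stability of [controlled] under the matrix operations is the local Lipschitz
    property of the right-hand side of their equation. *)
Variable delta : R -> R.

Definition controlled m n (F G : R -> 'M[R]_(m, n)) :=
  [/\ bounded_mx F, bounded_mx G &
    exists2 M : R, 0 <= M & forall t, 0 <= t <= T ->
      forall i j, `|F t i j - G t i j| <= M * delta t].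

Lemma controlled_refl m n (F : R -> 'M[R]_(m, n)) : bounded_mx F -> controlled F F.
Proof. by move=> bF; split=> //; exists 0 => // t _ i j; rewrite subrr normr0 mul0r. Qed.

Lemma controlled_cst m n (c : 'M[R]_(m, n)) : controlled (fun=> c) (fun=> c).
Proof. exact/controlled_refl/bounded_mx_cst. Qed.

Lemma controlledD m n (F F' G G' : R -> 'M[R]_(m, n)) :
  controlled F F' -> controlled G G' ->
  controlled (fun t => F t + G t) (fun t => F' t + G' t).
Proof.
case=> bF bF' [M1 M1_ge0 dF] [bG bG' [M2 M2_ge0 dG]].
split; [exact: bounded_mxD | exact: bounded_mxD |].
exists (M1 + M2) => [|t t0T i j]; first exact: addr_ge0.
rewrite !mxE opprD addrACA mulrDl (le_trans (ler_normD _ _)) //.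
by rewrite lerD ?dF ?dG.
Qed.

Lemma controlledN m n (F F' : R -> 'M[R]_(m, n)) :
  controlled F F' -> controlled (fun t => - F t) (fun t => - F' t).
Proof.
case=> bF bF' [M M_ge0 dF]; split; [exact: bounded_mxN | exact: bounded_mxN |].
by exists M => // t t0T i j; rewrite !mxE -opprD normrN dF.
Qed.

Lemma controlledB m n (F F' G G' : R -> 'M[R]_(m, n)) :
  controlled F F' -> controlled G G' ->
  controlled (fun t => F t - G t) (fun t => F' t - G' t).
Proof. by move=> cF cG; apply: controlledD cF (controlledN cG). Qed.

Lemma controlled_tr m n (F F' : R -> 'M[R]_(m, n)) :
  controlled F F' -> controlled (fun t => (F t)^T) (fun t => (F' t)^T).
Proof.
case=> bF bF' [M M_ge0 dF]; split; [exact: bounded_mx_tr | exact: bounded_mx_tr |].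
by exists M => // t t0T i j; rewrite !mxE dF.
Qed.

Lemma controlledM m n p (F F' : R -> 'M[R]_(m, n)) (G G' : R -> 'M[R]_(n, p)) :
  controlled F F' -> controlled G G' ->
  controlled (fun t => F t *m G t) (fun t => F' t *m G' t).
Proof.
case=> bF bF' [M3 M3_ge0 dF] [bG bG' [M4 M4_ge0 dG]].
split; [exact: bounded_mxM | exact: bounded_mxM |].
have [[M1 M1_ge0 F'_le] [M2 M2_ge0 G_le]] := (bF', bG).
exists (n%:R * (M3 * M2) + n%:R * (M1 * M4)) => [|t t0T i j].
  by rewrite addr_ge0 ?mulr_ge0.
have -> : (F t *m G t) i j - (F' t *m G' t) i j =
    ((F t - F' t) *m G t) i j + (F' t *m (G t - G' t)) i j.
  by rewrite mulmxBl mulmxBr !mxE addrA subrK.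
rewrite mulrDl (le_trans (ler_normD _ _)) // lerD //.
  rewrite (_ : _ * delta t = n%:R * (M3 * delta t * M2)); last by ring.
  by apply: norm_mulmx_entry_le => [i' k|]; [rewrite !mxE dF | exact: G_le].
rewrite (_ : _ * delta t = n%:R * (M1 * (M4 * delta t))); last by ring.
by apply: norm_mulmx_entry_le => [|k j']; [exact: F'_le | rewrite !mxE dG].
Qed.

Lemma controlledV n (S S' : R -> 'M[R]_n) :
  controlled S S' ->
  (forall t, 0 <= t <= T -> S t \in unitmx) ->
  (forall t, 0 <= t <= T -> S' t \in unitmx) ->
  bounded_mx (fun t => invmx (S t)) -> bounded_mx (fun t => invmx (S' t)) ->
  controlled (fun t => invmx (S t)) (fun t => invmx (S' t)).
Proof.
case=> _ _ [M3 M3_ge0 dS] S_unit S'_unit [M1 M1_ge0 Si_le] [M2 M2_ge0 S'i_le].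
split; [by exists M1 | by exists M2 |].
exists (n%:R * (n%:R * (M1 * M3) * M2)) => [|t t0T i j].
  by rewrite !mulr_ge0.
have -> : invmx (S t) i j - invmx (S' t) i j =
    (invmx (S t) *m (S' t - S t) *m invmx (S' t)) i j.
  rewrite mulmxBr mulmxBl -mulmxA mulmxV ?S'_unit // mulVmx ?S_unit //.
  by rewrite mulmx1 mul1mx !mxE.
rewrite (_ : _ * delta t = n%:R * (n%:R * (M1 * (M3 * delta t)) * M2)); last by ring.
apply: norm_mulmx_entry_le => [i' k|]; last exact: S'i_le.
apply: norm_mulmx_entry_le => [|l k']; first exact: Si_le.
by rewrite !mxE -opprB normrN dS.
Qed.

End UniformBounds.

(** * Gauge invariants of a reduction *)

Section GaugeInvariants.
Variables (R : comUnitRingType) (n s r : nat) (A : 'M[R]_n) (B : 'M[R]_s).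
Hypotheses (A_sym : A^T = A) (B_sym : B^T = B).

Definition wproj (U : 'M[R]_(n, r)) : 'M[R]_n := U *m U^T *m A.

Definition lowrank (U : 'M[R]_(n, r)) (Y : 'M[R]_(s, r)) : 'M[R]_(n, s) := U *m Y^T.

(** For Z = U Y^T and P = wproj U the inverse of [gram_completion Z P] is
    U C^-1 U^T A + (1 - P), so [dual_lowrank Z P] = U C^-1 Y^T: these express
    C^-1 = (Y^T B Y)^-1 through the invariants alone. *)
Definition gram_completion (Z : 'M[R]_(n, s)) (P : 'M[R]_n) : 'M[R]_n :=
  Z *m B *m Z^T *m A + (1%:M - P).

Definition dual_lowrank (Z : 'M[R]_(n, s)) (P : 'M[R]_n) : 'M[R]_(n, s) :=
  (invmx (gram_completion Z P) - (1%:M - P)) *m Z.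

Definition lowrank_rhs (Z : 'M[R]_(n, s)) (P : 'M[R]_n) (D : 'M[R]_(n, s)) :=
  (1%:M - P) *m D *m B *m (Z^T *m A *m dual_lowrank Z P) + P *m D.

Definition wproj_rhs (Z : 'M[R]_(n, s)) (P : 'M[R]_n) (D : 'M[R]_(n, s)) :=
  (1%:M - P) *m D *m B *m (dual_lowrank Z P)^T *m A +
  dual_lowrank Z P *m B *m D^T *m A *m (1%:M - P).

Definition frame_rotation (Ut U : 'M[R]_(n, r)) : 'M[R]_r := Ut^T *m A *m U.

Lemma lowrank_rotation (U : 'M[R]_(n, r)) (Y : 'M[R]_(s, r)) (Q : 'M[R]_r) :
  Q^T *m Q = 1%:M -> lowrank (U *m Q) (Y *m Q) = lowrank U Y.
Proof.
by move=> /mulmx1C QQt; rewrite /lowrank trmx_mul mulmxA -(mulmxA U) QQt mulmx1.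
Qed.

Lemma wproj_rotation (U : 'M[R]_(n, r)) (Q : 'M[R]_r) :
  Q^T *m Q = 1%:M -> wproj (U *m Q) = wproj U.
Proof.
by move=> /mulmx1C QQt; rewrite /wproj trmx_mul mulmxA -(mulmxA U) QQt mulmx1.
Qed.

Section Frame.
Variables (U : 'M[R]_(n, r)) (Y : 'M[R]_(s, r)).
Hypotheses (U_orth : U^T *m A *m U = 1%:M) (C_unit : Y^T *m B *m Y \in unitmx).
Let K := invmx (Y^T *m B *m Y).

Lemma mulmx_UtAU m (X : 'M[R]_(m, r)) : X *m U^T *m A *m U = X.
Proof. by rewrite -(mulmxA X) -(mulmxA X) U_orth mulmx1. Qed.

Lemma mulmx_KC m (X : 'M[R]_(m, r)) : X *m K *m Y^T *m B *m Y = X.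
Proof.
have -> : X *m K *m Y^T *m B *m Y = X *m (K *m (Y^T *m B *m Y)) by rewrite !mulmxA.
by rewrite mulVmx // mulmx1.
Qed.

Lemma gram_completion_inv :
  (U *m K *m U^T *m A + (1%:M - wproj U)) *m gram_completion (lowrank U Y) (wproj U)
  = 1%:M.
Proof.
rewrite /gram_completion /lowrank /wproj trmx_mul trmxK.
rewrite mulmxDl !(mulmxDr _ (_ *m _ *m _ *m _ *m _)).
rewrite !(mulmxBl, mulmxBr) !mul1mx !mulmx1 !mulmxA !mulmx_UtAU mulmx_KC.
by rewrite !subrr !(addr0, add0r, subr0) addrC subrK.
Qed.

Lemma gram_completion_unit : gram_completion (lowrank U Y) (wproj U) \in unitmx.
Proof. by case/mulmx1_unit: gram_completion_inv. Qed.

Lemma invmx_gram_completion :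
  invmx (gram_completion (lowrank U Y) (wproj U)) = U *m K *m U^T *m A + (1%:M - wproj U).
Proof.
rewrite -[LHS]mul1mx -{1}gram_completion_inv -[_ *m _ *m invmx _]mulmxA.
by rewrite mulmxV ?gram_completion_unit // mulmx1.
Qed.

Lemma dual_lowrankE : dual_lowrank (lowrank U Y) (wproj U) = U *m K *m Y^T.
Proof. by rewrite /dual_lowrank invmx_gram_completion addrK /lowrank !mulmxA mulmx_UtAU. Qed.

Lemma trmx_K : K^T = K.
Proof. by rewrite /K trmx_inv !trmx_mul trmxK B_sym mulmxA. Qed.

Variables (dT : 'M[R]_(n, s)) (dU : 'M[R]_(n, r)) (dY : 'M[R]_(s, r)) (phi : 'M[R]_r).
Hypotheses (phi_skew : phi^T = - phi)
  (dU_eq : dU = (1%:M - U *m U^T *m A) *m dT *m B *m Y *m K + U *m phi)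
  (dY_eq : dY = dT^T *m A *m U + Y *m phi).

Lemma lowrank_deriv_eq :
  dU *m Y^T + U *m dY^T = lowrank_rhs (lowrank U Y) (wproj U) dT.
Proof.
rewrite /lowrank_rhs dual_lowrankE /lowrank trmx_mul trmxK !mulmxA !mulmx_UtAU.
rewrite dU_eq dY_eq /wproj.
set X := (1%:M - _) *m dT *m B *m Y *m K.
rewrite linearD /= !trmx_mul !trmxK A_sym phi_skew.
rewrite [(X + _) *m _]mulmxDl mulmxDr mulNmx mulmxN !mulmxA.
by rewrite addrACA subrr addr0.
Qed.

Lemma wproj_deriv_eq :
  (dU *m U^T + U *m dU^T) *m A = wproj_rhs (lowrank U Y) (wproj U) dT.
Proof.
rewrite /wproj_rhs dual_lowrankE /wproj dU_eq.
rewrite linearD /= !trmx_mul !trmxK linearB /= trmx1 !trmx_mul trmxK A_sym B_sym.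
rewrite phi_skew trmx_K !mulmxA.
set X := (1%:M - _) *m dT *m B *m Y *m K.
have AC_eq : (1%:M - A *m U *m U^T) *m A = A *m (1%:M - U *m U^T *m A).
  by rewrite mulmxBl mulmxBr mul1mx mulmx1 !mulmxA.
rewrite [(X + _) *m _]mulmxDl [U *m (_ + _)]mulmxDr mulNmx mulmxN !mulmxA !mulmxDl mulNmx.
rewrite -[_ *m (1%:M - A *m U *m U^T) *m A]mulmxA AC_eq !mulmxA.
by rewrite addrACA subrr addr0.
Qed.

End Frame.

Section FrameRotation.
Variables (U Ut : 'M[R]_(n, r)) (Y Yt : 'M[R]_(s, r)).
Hypotheses (U_orth : U^T *m A *m U = 1%:M) (Ut_orth : Ut^T *m A *m Ut = 1%:M).
Hypothesis wproj_eq : wproj U = wproj Ut.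

Lemma wproj_frame : wproj Ut *m U = U.
Proof. by rewrite -wproj_eq /wproj mulmx_UtAU. Qed.

Lemma frame_rotationP : Ut *m frame_rotation Ut U = U.
Proof. by rewrite /frame_rotation !mulmxA wproj_frame. Qed.

Lemma frame_rotation_orthogonal : (frame_rotation Ut U)^T *m frame_rotation Ut U = 1%:M.
Proof.
have -> : (frame_rotation Ut U)^T *m frame_rotation Ut U = U^T *m A *m (wproj Ut *m U).
  by rewrite /frame_rotation /wproj !trmx_mul trmxK A_sym !mulmxA.
by rewrite wproj_frame.
Qed.

Lemma frame_rotation_coef : lowrank U Y = lowrank Ut Yt -> Yt *m frame_rotation Ut U = Y.
Proof.
move=> lowrank_eq; have := congr1 (fun Z => Z^T *m A *m U) lowrank_eq.
by rewrite /lowrank /frame_rotation !trmx_mul !trmxK !mulmxA (mulmx_UtAU U_orth) => <-.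
Qed.

Lemma frame_rotation_deriv_eq (dU dUt G Gt : 'M[R]_(n, r)) (phi phit : 'M[R]_r) :
  phit^T = - phit ->
  dU = (1%:M - wproj U) *m G + U *m phi -> dUt = (1%:M - wproj Ut) *m Gt + Ut *m phit ->
  dUt^T *m A *m U + Ut^T *m A *m dU =
  frame_rotation Ut U *m phi - phit *m frame_rotation Ut U.
Proof.
move=> phit_skew -> ->.
have AU_perp : (1%:M - wproj Ut)^T *m A *m U = 0.
  rewrite linearB /= trmx1 !mulmxBl mul1mx.
  have -> : (wproj Ut)^T *m A *m U = A *m (wproj Ut *m U).
    by rewrite /wproj !trmx_mul trmxK A_sym !mulmxA.
  by rewrite wproj_frame subrr.
have UtA_perp : Ut^T *m A *m (1%:M - wproj U) = 0.
  by rewrite mulmxBr mulmx1 wproj_eq /wproj !mulmxA Ut_orth mul1mx subrr.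
rewrite [Ut^T *m A *m _]mulmxDr [Ut^T *m A *m (_ *m G)]mulmxA UtA_perp mul0mx add0r.
rewrite linearD /= !trmx_mul phit_skew !mulmxDl.
rewrite -(mulmxA Gt^T) -(mulmxA Gt^T) AU_perp mulmx0 add0r.
by rewrite /frame_rotation !mulNmx !mulmxA addrC.
Qed.
End FrameRotation.

End GaugeInvariants.

(** * The invariants solve a closed equation *)

Section InvariantFlow.
Variables (R : realType) (n s : nat) (A : 'M[R]_n) (B : 'M[R]_s).

Lemma controlled_rhs (T : R) (delta : R -> R) (Z Zt D : R -> 'M[R]_(n, s))
    (P Pt : R -> 'M[R]_n) :
  let S t := gram_completion A B (Z t) (P t) in
  let St t := gram_completion A B (Zt t) (Pt t) in
  controlled T delta Z Zt -> controlled T delta P Pt -> bounded_mx T D ->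
  (forall t, 0 <= t <= T -> S t \in unitmx) -> (forall t, 0 <= t <= T -> St t \in unitmx) ->
  bounded_mx T (fun t => invmx (S t)) -> bounded_mx T (fun t => invmx (St t)) ->
  controlled T delta (fun t => lowrank_rhs A B (Z t) (P t) (D t))
                     (fun t => lowrank_rhs A B (Zt t) (Pt t) (D t)) /\
  controlled T delta (fun t => wproj_rhs A B (Z t) (P t) (D t))
                     (fun t => wproj_rhs A B (Zt t) (Pt t) (D t)).
Proof.
move=> S St cZ cP bD S_unit St_unit bSi bSti.
have cst_ctl m k (c : 'M[R]_(m, k)) : controlled T delta (fun=> c) (fun=> c).
  exact: controlled_cst.
have [cA cB] := (cst_ctl _ _ A, cst_ctl _ _ B).
have cD := controlled_refl delta bD.
have cQ := controlledB (cst_ctl _ _ 1%:M) cP.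
have cS : controlled T delta S St.
  exact: controlledD (controlledM (controlledM (controlledM cZ cB) (controlled_tr cZ)) cA) cQ.
have cV := controlledM (controlledB (controlledV cS S_unit St_unit bSi bSti) cQ) cZ.
split.
  exact: controlledD (controlledM (controlledM (controlledM cQ cD) cB)
    (controlledM (controlledM (controlled_tr cZ) cA) cV)) (controlledM cP cD).
exact: controlledD (controlledM (controlledM (controlledM (controlledM cQ cD) cB)
    (controlled_tr cV)) cA)
  (controlledM (controlledM (controlledM (controlledM cV cB) (controlled_tr cD)) cA) cQ).
Qed.

Lemma mx_cont_at_gram_completion (Z : R -> 'M[R]_(n, s)) (P : R -> 'M[R]_n) t :
  mx_cont_at Z t -> mx_cont_at P t ->
  mx_cont_at (fun t => gram_completion A B (Z t) (P t)) t.
Proof.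
move=> cZ cP; apply: mx_cont_atD; last first.
  by apply: mx_cont_atD; [exact: mx_cont_at_cst | exact: mx_cont_atN].
apply: mx_cont_atM; last exact: mx_cont_at_cst.
apply: mx_cont_atM; last exact: mx_cont_at_tr.
by apply: mx_cont_atM; last exact: mx_cont_at_cst.
Qed.

Definition invariant_entry (Z : 'M[R]_(n, s)) (P : 'M[R]_n)
    (e : 'I_n * 'I_s + 'I_n * 'I_n) : R :=
  match e with inl ij => Z ij.1 ij.2 | inr ij => P ij.1 ij.2 end.

Section TwoTrajectories.
Variables (dT Z Zt : R -> 'M[R]_(n, s)) (P Pt : R -> 'M[R]_n).
Hypothesis cdT : forall t, 0 <= t -> mx_cont_at dT t.
Hypotheses (dZ : forall t, 0 <= t -> mx_deriv_at Z t (lowrank_rhs A B (Z t) (P t) (dT t)))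
  (dP : forall t, 0 <= t -> mx_deriv_at P t (wproj_rhs A B (Z t) (P t) (dT t)))
  (dZt : forall t, 0 <= t -> mx_deriv_at Zt t (lowrank_rhs A B (Zt t) (Pt t) (dT t)))
  (dPt : forall t, 0 <= t -> mx_deriv_at Pt t (wproj_rhs A B (Zt t) (Pt t) (dT t))).
Hypotheses (S_unit : forall t, 0 <= t -> gram_completion A B (Z t) (P t) \in unitmx)
  (St_unit : forall t, 0 <= t -> gram_completion A B (Zt t) (Pt t) \in unitmx).

Let x t := invariant_entry (Z t) (P t).
Let y t := invariant_entry (Zt t) (Pt t).
Let dx t := invariant_entry (lowrank_rhs A B (Z t) (P t) (dT t))
                            (wproj_rhs A B (Z t) (P t) (dT t)).
Let dy t := invariant_entry (lowrank_rhs A B (Zt t) (Pt t) (dT t))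
                            (wproj_rhs A B (Zt t) (Pt t) (dT t)).

Lemma invariant_rhs_lipschitz T : 0 <= T ->
  exists2 M : R, 0 <= M & forall t, 0 <= t <= T ->
    forall e, `|dx t e - dy t e| <= M * \sum_k `|x t k - y t k|.
Proof.
move=> T_ge0; pose delta t := \sum_k `|x t k - y t k|.
have in0 t : 0 <= t <= T -> 0 <= t by case/andP.
have cont_deriv m k (F dF : R -> 'M[R]_(m, k)) :
    (forall t, 0 <= t -> mx_deriv_at F t (dF t)) -> forall t, 0 <= t -> mx_cont_at F t.
  by move=> dF_F t /dF_F; exact: mx_deriv_at_cont.
have bounded_cont m k (F : R -> 'M[R]_(m, k)) :
    (forall t, 0 <= t -> mx_cont_at F t) -> bounded_mx T F.
  by move=> cF; apply: bounded_mx_cont => // t /in0; exact: cF.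
have entry_le t e : `|x t e - y t e| <= 1 * delta t.
  by rewrite mul1r (ler_sum_term (f := fun e => `|x t e - y t e|)).
have cZ : controlled T delta Z Zt.
  split; [exact/bounded_cont/cont_deriv/dZ | exact/bounded_cont/cont_deriv/dZt |].
  by exists 1 => // t _ i j; exact: (entry_le t (inl (i, j))).
have cP : controlled T delta P Pt.
  split; [exact/bounded_cont/cont_deriv/dP | exact/bounded_cont/cont_deriv/dPt |].
  by exists 1 => // t _ i j; exact: (entry_le t (inr (i, j))).
have bSi : bounded_mx T (fun t => invmx (gram_completion A B (Z t) (P t))).
  apply: bounded_mx_invmx => // t /in0 t_ge0; last exact: S_unit.
  exact: mx_cont_at_gram_completion (cont_deriv _ _ _ _ dZ _ t_ge0)
    (cont_deriv _ _ _ _ dP _ t_ge0).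
have bSti : bounded_mx T (fun t => invmx (gram_completion A B (Zt t) (Pt t))).
  apply: bounded_mx_invmx => // t /in0 t_ge0; last exact: St_unit.
  exact: mx_cont_at_gram_completion (cont_deriv _ _ _ _ dZt _ t_ge0)
    (cont_deriv _ _ _ _ dPt _ t_ge0).
have [[_ _ [M1 M1_ge0 dZ_le]] [_ _ [M2 M2_ge0 dP_le]]] :=
  controlled_rhs cZ cP (bounded_cont _ _ _ cdT) (fun t t0T => S_unit (in0 t t0T))
    (fun t t0T => St_unit (in0 t t0T)) bSi bSti.
exists (M1 + M2) => [|t t0T [[i j]|[i j]]]; first exact: addr_ge0.
  by apply: le_trans (dZ_le t t0T i j) _; rewrite ler_wpM2r ?lerDl // sumr_ge0.
by apply: le_trans (dP_le t t0T i j) _; rewrite ler_wpM2r ?lerDr // sumr_ge0.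
Qed.

Lemma gauge_invariants_unique : Z 0 = Zt 0 -> P 0 = Pt 0 ->
  forall t, 0 <= t -> Z t = Zt t /\ P t = Pt t.
Proof.
move=> Z0 P0.
have xy : forall t, 0 <= t -> x t =1 y t.
  apply: (@gronwall_unique _ _ x y dx dy _ _ _ invariant_rhs_lipschitz).
  - by move=> t t_ge0 [[i j]|[i j]]; [exact: dZ | exact: dP].
  - by move=> t t_ge0 [[i j]|[i j]]; [exact: dZt | exact: dPt].
  by case=> -[i j]; rewrite /x /y /= ?Z0 ?P0.
move=> t t_ge0; split; apply/matrixP => i j.
  exact: (xy t t_ge0 (inl (i, j))).
exact: (xy t t_ge0 (inr (i, j))).
Qed.

End TwoTrajectories.

Section Reduction.
Hypotheses (A_sym : A^T = A) (B_sym : B^T = B).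
Variables (r : nat) (dT : R -> 'M[R]_(n, s)) (U dU : R -> 'M[R]_(n, r)).
Variables (Y dY : R -> 'M[R]_(s, r)) (phi : R -> 'M[R]_r) (t : R).
Hypotheses (dU_U : mx_deriv_at U t (dU t)) (dY_Y : mx_deriv_at Y t (dY t)).
Hypotheses (phi_skew : skew_mx (phi t)) (U_orth : (U t)^T *m A *m U t = 1%:M).
Hypotheses (C_unit : (Y t)^T *m B *m Y t \in unitmx).
Hypothesis evol : evol_eqs A B (dT t) (U t) (dU t) (Y t) (dY t) (phi t).

Lemma lowrank_deriv : mx_deriv_at (fun t => lowrank (U t) (Y t)) t
  (lowrank_rhs A B (lowrank (U t) (Y t)) (wproj A (U t)) (dT t)).
Proof.
have [dU_eq dY_eq] := evol.
rewrite -(lowrank_deriv_eq A_sym U_orth C_unit phi_skew dU_eq dY_eq).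
exact: mx_deriv_atM dU_U (mx_deriv_at_tr dY_Y).
Qed.

Lemma wproj_deriv : mx_deriv_at (fun t => wproj A (U t)) t
  (wproj_rhs A B (lowrank (U t) (Y t)) (wproj A (U t)) (dT t)).
Proof.
have [dU_eq _] := evol.
rewrite -(wproj_deriv_eq A_sym B_sym U_orth C_unit phi_skew dU_eq).
have := mx_deriv_atM (mx_deriv_atM dU_U (mx_deriv_at_tr dU_U)) (mx_deriv_at_cst A t).
by rewrite mulmx0 addr0.
Qed.

End Reduction.

Lemma frame_rotation_deriv r (dT : R -> 'M[R]_(n, s)) (U dU Ut dUt : R -> 'M[R]_(n, r))
    (Y dY Yt dYt : R -> 'M[R]_(s, r)) (phi phit : R -> 'M[R]_r) t :
  A^T = A -> mx_deriv_at U t (dU t) -> mx_deriv_at Ut t (dUt t) -> skew_mx (phit t) ->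
  (U t)^T *m A *m U t = 1%:M -> (Ut t)^T *m A *m Ut t = 1%:M ->
  wproj A (U t) = wproj A (Ut t) ->
  evol_eqs A B (dT t) (U t) (dU t) (Y t) (dY t) (phi t) ->
  evol_eqs A B (dT t) (Ut t) (dUt t) (Yt t) (dYt t) (phit t) ->
  mx_deriv_at (fun t => frame_rotation A (Ut t) (U t)) t
    (frame_rotation A (Ut t) (U t) *m phi t - phit t *m frame_rotation A (Ut t) (U t)).
Proof.
move=> A_sym dU_U dUt_Ut phit_skew U_orth Ut_orth wproj_eq [dU_eq _] [dUt_eq _].
have dU_eq' : dU t = (1%:M - wproj A (U t)) *m
    (dT t *m B *m Y t *m invmx ((Y t)^T *m B *m Y t)) + U t *m phi t.
  by rewrite dU_eq /wproj !mulmxA.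
have dUt_eq' : dUt t = (1%:M - wproj A (Ut t)) *m
    (dT t *m B *m Yt t *m invmx ((Yt t)^T *m B *m Yt t)) + Ut t *m phit t.
  by rewrite dUt_eq /wproj !mulmxA.
rewrite -(frame_rotation_deriv_eq A_sym U_orth Ut_orth wproj_eq phit_skew dU_eq' dUt_eq').
have := mx_deriv_atM (mx_deriv_atM (mx_deriv_at_tr dUt_Ut) (mx_deriv_at_cst A t)) dU_U.
by rewrite mulmx0 addr0.
Qed.

End InvariantFlow.

Unset Implicit Arguments.
Theorem mainTheorem1 (R : realType) (n s r : nat)
  (hn : (0 < n)%N) (hs : (0 < s)%N) (hr : (0 < r)%N)
  (wx : 'rV[R]_n) (wxi : 'rV[R]_s)
  (hwx : pos_rV wx) (hwxi : pos_rV wxi)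
  (T dT : R -> 'M[R]_(n, s))
  (U dU Ut dUt : R -> 'M[R]_(n, r))
  (Y dY Yt dYt : R -> 'M[R]_(s, r))
  (phi phit : R -> 'M[R]_r)
  (R0 : 'M[R]_r)
  (hT : forall t, 0 <= t -> mx_deriv_at T t (dT t))
  (hdTc : forall t, 0 <= t -> mx_cont_at dT t)
  (hU : forall t, 0 <= t -> mx_deriv_at U t (dU t))
  (hY : forall t, 0 <= t -> mx_deriv_at Y t (dY t))
  (hUt : forall t, 0 <= t -> mx_deriv_at Ut t (dUt t))
  (hYt : forall t, 0 <= t -> mx_deriv_at Yt t (dYt t))
  (hphic : forall t, 0 <= t -> mx_cont_at phi t)
  (hphitc : forall t, 0 <= t -> mx_cont_at phit t)
  (hphis : forall t, 0 <= t -> skew_mx (phi t))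
  (hphits : forall t, 0 <= t -> skew_mx (phit t))
  (hUo : forall t, 0 <= t -> (U t)^T *m diag_mx wx *m U t = 1%:M)
  (hUto : forall t, 0 <= t -> (Ut t)^T *m diag_mx wx *m Ut t = 1%:M)
  (hC : forall t, 0 <= t -> (Y t)^T *m diag_mx wxi *m Y t \in unitmx)
  (hCt : forall t, 0 <= t -> (Yt t)^T *m diag_mx wxi *m Yt t \in unitmx)
  (hev : forall t, 0 <= t ->
     evol_eqs (diag_mx wx) (diag_mx wxi) (dT t) (U t) (dU t) (Y t) (dY t) (phi t))
  (hevt : forall t, 0 <= t ->
     evol_eqs (diag_mx wx) (diag_mx wxi) (dT t) (Ut t) (dUt t) (Yt t) (dYt t) (phit t))
  (hR0 : orthogonal_mx R0)
  (hU0 : U 0 = Ut 0 *m R0) (hY0 : Y 0 = Yt 0 *m R0) :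
  exists Rm : R -> 'M[R]_r,
    Rm 0 = R0 /\
    forall t, 0 <= t ->
      mx_deriv_at Rm t (Rm t *m phi t - phit t *m Rm t) /\
      orthogonal_mx (Rm t) /\
      U t = Ut t *m Rm t /\ Y t = Yt t *m Rm t.
Proof.
pose A := diag_mx wx; pose B := diag_mx wxi.
have A_sym : A^T = A := tr_diag_mx wx.
have B_sym : B^T = B := tr_diag_mx wxi.
have Z0 : lowrank (U 0) (Y 0) = lowrank (Ut 0) (Yt 0) by rewrite hU0 hY0 lowrank_rotation.
have P0 : wproj A (U 0) = wproj A (Ut 0) by rewrite hU0 wproj_rotation.
have invariants_eq := gauge_invariants_unique hdTc
  (fun t h => lowrank_deriv A_sym (hU t h) (hY t h) (hphis t h) (hUo t h) (hC t h) (hev t h))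
  (fun t h => wproj_deriv A_sym B_sym (hU t h) (hphis t h) (hUo t h) (hC t h) (hev t h))
  (fun t h => lowrank_deriv A_sym (hUt t h) (hYt t h) (hphits t h) (hUto t h) (hCt t h)
                            (hevt t h))
  (fun t h => wproj_deriv A_sym B_sym (hUt t h) (hphits t h) (hUto t h) (hCt t h) (hevt t h))
  (fun t h => gram_completion_unit (hUo t h) (hC t h))
  (fun t h => gram_completion_unit (hUto t h) (hCt t h)) Z0 P0.
exists (fun t => frame_rotation A (Ut t) (U t)); split.
  by rewrite /frame_rotation hU0 !mulmxA (hUto 0 (lexx 0)) mul1mx.
move=> t t_ge0; have [Z_eq P_eq] := invariants_eq t t_ge0.
split; first exact: frame_rotation_deriv A_sym (hU t t_ge0) (hUt t t_ge0) (hphits t t_ge0)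
  (hUo t t_ge0) (hUto t t_ge0) P_eq (hev t t_ge0) (hevt t t_ge0).
split; first by rewrite /orthogonal_mx (frame_rotation_orthogonal A_sym (hUo t t_ge0) P_eq).
split; first by rewrite (frame_rotationP (hUo t t_ge0) P_eq).
by rewrite (frame_rotation_coef (hUo t t_ge0) Z_eq).
Qed.
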